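(* Let $R_1,R_2$ be rings, $M$ an $(R_1,R_2)$-bimodule and $P$ an $(R_2,R_1)$-bimodule, and let $R=\begin{pmatrix} R_1 & M\\ P & R_2\end{pmatrix}$ be a trivial Morita context, i.e. the context products $M\times P\to R_1$ and $P\times M\to R_2$ are zero ($MP=0$, $PM=0$), with ring structure given by the usual matrix operations. Then $R$ is NJ-symmetric if and only if $R_1$ and $R_2$ are NJ-symmetric.
   Context: Rings are associative with identity. $N(S)$ is the set of nilpotent elements, $J(S)$ the Jacobson radical of a ring $S$. $S$ is NJ-symmetric if for all $a,b,c\in S$, $abc\in N(S)$ implies $bac\in J(S)$. *)

From HB Require Import structures.
From mathcomp Require Import all_boot all_order all_algebra.
Set Implicit Arguments. Unset Strict Implicit. Unset Printing Implicit Defensive.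
Import GRing.Theory.
Local Open Scope ring_scope.

Definition nilpotent_el (S : pzRingType) (x : S) : Prop := exists n : nat, x ^+ n = 0.

Definition left_ideal (S : pzRingType) (I : S -> Prop) : Prop :=
  [/\ I 0, (forall x y, I x -> I y -> I (x - y)) & (forall r x, I x -> I (r * x))].

Definition maximal_left_ideal (S : pzRingType) (I : S -> Prop) : Prop :=
  [/\ left_ideal I, ~ I 1 &
      forall K : S -> Prop, left_ideal K -> (forall x, I x -> K x) ->
        ~ K 1 -> forall x, K x -> I x].

Definition jacobson_el (S : pzRingType) (x : S) : Prop :=
  forall I : S -> Prop, maximal_left_ideal I -> I x.

Definition NJ_symmetric (S : pzRingType) : Prop :=
  forall a b c : S, nilpotent_el (a * b * c) -> jacobson_el (b * a * c).

Record bimod (R1 R2 : pzRingType) := Bimod {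
  bm_car :> zmodType;
  bm_l : R1 -> bm_car -> bm_car;
  bm_r : bm_car -> R2 -> bm_car;
  bm_lDl : forall a b m, bm_l (a + b) m = bm_l a m + bm_l b m;
  bm_lDr : forall a m n, bm_l a (m + n) = bm_l a m + bm_l a n;
  bm_lA : forall a b m, bm_l (a * b) m = bm_l a (bm_l b m);
  bm_l1 : forall m, bm_l 1 m = m;
  bm_rDl : forall m n s, bm_r (m + n) s = bm_r m s + bm_r n s;
  bm_rDr : forall m s t, bm_r m (s + t) = bm_r m s + bm_r m t;
  bm_rA : forall m s t, bm_r m (s * t) = bm_r (bm_r m s) t;
  bm_r1 : forall m, bm_r m 1 = m;
  bm_lr : forall a m s, bm_l a (bm_r m s) = bm_r (bm_l a m) s
}.

Section Morita.
Variables (R1 R2 : pzRingType) (M : bimod R1 R2) (P : bimod R2 R1).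

(* an element ((a, m), p, b) stands for the matrix [[a, m], [p, b]] *)
Definition morita_car := (R1 * M * P * R2)%type.
HB.instance Definition _ := GRing.Zmodule.on morita_car.

Definition mor_one : morita_car := (1, 0, 0, 1).

(* [[a,m],[p,b]] [[a',m'],[p',b']] = [[aa' + mp', am' + mb'], [pa' + bp', pm' + bb']]
   with the context products mp' and pm' equal to zero *)
Definition mor_mul (x y : morita_car) : morita_car :=
  let: (a, m, p, b) := x in let: (a', m', p', b') := y in
  (a * a', bm_l a m' + bm_r m b', bm_r p a' + bm_l b p', b * b').

Lemma bm_l0 (R S : pzRingType) (N : bimod R S) a : bm_l a (0 : N) = 0.
Proof. by apply: (@addrI _ (bm_l a 0)); rewrite -bm_lDr !addr0. Qed.
Lemma bm_0l (R S : pzRingType) (N : bimod R S) (m : N) : bm_l 0 m = 0.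
Proof. by apply: (@addrI _ (bm_l 0 m)); rewrite -bm_lDl !addr0. Qed.
Lemma bm_r0 (R S : pzRingType) (N : bimod R S) s : bm_r (0 : N) s = 0.
Proof. by apply: (@addrI _ (bm_r (0:N) s)); rewrite -bm_rDl !addr0. Qed.
Lemma bm_0r (R S : pzRingType) (N : bimod R S) (m : N) : bm_r m 0 = 0.
Proof. by apply: (@addrI _ (bm_r m 0)); rewrite -bm_rDr !addr0. Qed.

Lemma mor_mulA : associative mor_mul.
Proof.
move=> [[[a m] p] b] [[[a' m'] p'] b'] [[[a'' m''] p''] b''] /=.
by rewrite mulrA !bm_lDr !bm_rDl bm_lA bm_rA !bm_lr bm_lA bm_rA !addrA mulrA.
Qed.
Lemma mor_mul1r : left_id mor_one mor_mul.
Proof. by move=> [[[a m] p] b] /=; rewrite !mul1r !bm_l1 !bm_r0 add0r addr0. Qed.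
Lemma mor_mulr1 : right_id mor_one mor_mul.
Proof. by move=> [[[a m] p] b] /=; rewrite !mulr1 !bm_r1 !bm_l0 add0r addr0. Qed.
Lemma mor_mulDl : left_distributive mor_mul +%R.
Proof.
move=> [[[a m] p] b] [[[a' m'] p'] b'] [[[a'' m''] p''] b''] /=.
rewrite !mulrDl bm_lDl bm_rDl bm_rDl bm_lDl.
by congr (_, _, _, _); rewrite -!addrA; congr (_ + _); rewrite addrCA.
Qed.
Lemma mor_mulDr : right_distributive mor_mul +%R.
Proof.
move=> [[[a m] p] b] [[[a' m'] p'] b'] [[[a'' m''] p''] b''] /=.
rewrite !mulrDr bm_lDr bm_rDr bm_rDr bm_lDr.
by congr (_, _, _, _); rewrite -!addrA; congr (_ + _); rewrite addrCA.
Qed.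

HB.instance Definition _ := GRing.Zmodule_isPzRing.Build morita_car
  mor_mulA mor_mul1r mor_mulr1 mor_mulDl mor_mulDr.

Definition morita_ring : pzRingType := morita_car.
End Morita.

From HB Require Import structures.
From mathcomp Require Import all_boot all_order all_algebra.
From Stdlib Require Import Classical.
Set Implicit Arguments. Unset Strict Implicit. Unset Printing Implicit Defensive.
Import GRing.Theory.
Local Open Scope ring_scope.

(* Since MP = PM = 0, projecting onto the diagonal is a surjective ring morphism
   R -> R1 x R2 whose kernel, the off-diagonal part, satisfies (r k)^2 = 0. Hence
   the kernel consists of nilpotent elements, and lies in J(R) because each
   1 - r k has the left inverse 1 + r k; NJ-symmetry transfers in both directions
   along such a morphism. It remains to compare R1 x R2 with its factors: every
   maximal left ideal of R1 x R2 contains (1, 0) or (0, 1), hence the kernel of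
   one of the projections, so J(R1) x J(R2) lies in J(R1 x R2). *)

Lemma left_idealD (S : pzRingType) (I : S -> Prop) x y :
  left_ideal I -> I x -> I y -> I (x + y).
Proof.
by case=> I0 IB _ Ix Iy; have := IB _ _ Ix (IB _ _ I0 Iy); rewrite sub0r opprK.
Qed.

Lemma maximal_left_ideal_comax (S : pzRingType) (I : S -> Prop) (x : S) :
  maximal_left_ideal I -> ~ I x -> exists i r, I i /\ i + r * x = 1.
Proof.
case=> [[I0 IB IM] _ Imax] Ix.
pose K y := exists i r, I i /\ i + r * x = y.
have idealK : left_ideal K.
  split.
  - by exists 0, 0; rewrite mul0r addr0.
  - move=> _ _ [i [r [Ii <-]]] [j [s [Ij <-]]].
    exists (i - j), (r - s); split; first exact: IB.
    by rewrite mulrBl opprD addrACA.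
  - move=> s _ [i [r [Ii <-]]]; exists (s * i), (s * r); split; first exact: IM.
    by rewrite mulrDr mulrA.
have IK y : I y -> K y by exists y, 0; rewrite mul0r addr0.
have [[i [r [Ii E]]]|K1] := classic (K 1); first by exists i, r.
by case: Ix; apply: (Imax K) => //; exists 0, 1; rewrite add0r mul1r.
Qed.

Lemma jacobson_el_linv (S : pzRingType) (x : S) :
  (forall r, exists u, u * (1 - r * x) = 1) -> jacobson_el x.
Proof.
move=> linv I maxI; apply: NNPP => Ix.
have [i [r [Ii E]]] := maximal_left_ideal_comax maxI Ix.
have [u Eu] := linv r; case: maxI => [[_ _ IM] I1 _]; apply: I1.
by rewrite -Eu -E addrK; apply: IM.
Qed.

Lemma jacobson_el_sqr0 (S : pzRingType) (x : S) :
  (forall r, (r * x) ^+ 2 = 0) -> jacobson_el x.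
Proof.
move=> sqr0; apply: jacobson_el_linv => r; exists (1 + r * x).
by rewrite mulrDl mul1r mulrBr mulr1 -expr2 sqr0 subr0 addrNK.
Qed.

Section SurjectiveMorphism.
Variables (S T : pzRingType) (f : {rmorphism S -> T}).
Hypothesis f_surj : forall t, exists s, f s = t.

Lemma left_ideal_preim (I : T -> Prop) : left_ideal I -> left_ideal (fun s => I (f s)).
Proof.
case=> I0 IB IM; split=> [|x y|r x]; rewrite ?rmorph0 ?rmorphB ?rmorphM //.
  exact: IB.
exact: IM.
Qed.

Lemma left_ideal_image (I : S -> Prop) :
  left_ideal I -> left_ideal (fun t => exists2 s, I s & f s = t).
Proof.
case=> I0 IB IM; split.
- by exists 0; rewrite ?rmorph0.
- by move=> _ _ [x Ix <-] [y Iy <-]; exists (x - y); rewrite ?rmorphB //; apply: IB.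
- move=> r _ [x Ix <-]; have [s <-] := f_surj r.
  by exists (s * x); rewrite ?rmorphM //; apply: IM.
Qed.

Lemma maximal_left_ideal_preim (I : T -> Prop) :
  maximal_left_ideal I -> maximal_left_ideal (fun s => I (f s)).
Proof.
case=> idealI I1 Imax; split; [exact: left_ideal_preim | by rewrite rmorph1 |].
move=> K idealK IK K1 x Kx.
apply: (Imax _ (left_ideal_image idealK)); last by exists x.
- by move=> t; have [s <- Is] := f_surj t; exists s; first exact: IK.
- case=> s Ks fs1; apply: K1; rewrite -(subrK s 1); apply: left_idealD => //.
  by apply: IK; rewrite rmorphB rmorph1 fs1 subrr; case: idealI.
Qed.

Lemma jacobson_el_rmorph x : jacobson_el x -> jacobson_el (f x).
Proof. by move=> Jx I /maximal_left_ideal_preim /Jx. Qed.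

Lemma maximal_left_ideal_image (I : S -> Prop) :
  maximal_left_ideal I -> (forall k, f k = 0 -> I k) ->
  maximal_left_ideal (fun t => exists2 s, I s & f s = t).
Proof.
case=> idealI I1 Imax kerI; split; first exact: left_ideal_image.
- case=> s Is fs1; apply: I1; rewrite -(subrK s 1); apply: left_idealD => //.
  by apply: kerI; rewrite rmorphB rmorph1 fs1 subrr.
- move=> K idealK IK K1 t; have [s <- Kfs] := f_surj t; exists s => //.
  apply: (Imax _ (left_ideal_preim idealK)) => // [x Ix|].
  + by apply: IK; exists x.
  + by rewrite rmorph1.
Qed.

Lemma maximal_left_ideal_jacobson_preim (I : S -> Prop) x :
  maximal_left_ideal I -> (forall k, f k = 0 -> I k) -> jacobson_el (f x) -> I x.
Proof.
move=> maxI kerI /(_ _ (maximal_left_ideal_image maxI kerI))[s Is fsx].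
have [idealI _ _] := maxI; rewrite -(subrK s x); apply: left_idealD => //.
by apply: kerI; rewrite rmorphB fsx subrr.
Qed.

Lemma jacobson_el_rmorph_lift x :
  (forall k, f k = 0 -> jacobson_el k) -> jacobson_el (f x) -> jacobson_el x.
Proof.
by move=> kerJ Jfx I maxI; apply: maximal_left_ideal_jacobson_preim => // k /kerJ; apply.
Qed.

Lemma NJ_symmetric_sqr0_kernel :
  (forall k r, f k = 0 -> (r * k) ^+ 2 = 0) -> NJ_symmetric S <-> NJ_symmetric T.
Proof.
move=> ker_sqr0.
have kerJ k : f k = 0 -> jacobson_el k.
  by move=> fk0; apply: jacobson_el_sqr0 => r; apply: ker_sqr0.
have nilpotent_lift x : nilpotent_el (f x) -> nilpotent_el x.
  case=> n fxn0; exists (n * 2)%N; rewrite exprM -[_ ^+ n]mul1r.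
  by apply: ker_sqr0; rewrite rmorphXn.
split=> NJ a b c.
- have [[x <-] [y <-] [z <-]] := And3 (f_surj a) (f_surj b) (f_surj c).
  by rewrite -!rmorphM => /nilpotent_lift /NJ; apply: jacobson_el_rmorph.
- case=> n abcn0; apply: (jacobson_el_rmorph_lift kerJ); rewrite !rmorphM; apply: NJ.
  by exists n; rewrite -!rmorphM -rmorphXn abcn0 rmorph0.
Qed.

End SurjectiveMorphism.

Lemma NJ_symmetric_retract (S T : pzRingType) (f : {rmorphism S -> T}) (g : T -> S) :
  {morph g : x y / x * y} -> g 0 = 0 -> cancel g f ->
  NJ_symmetric S -> NJ_symmetric T.
Proof.
move=> gM g0 gK NJ a b c [n abcn0].
have gX x k : g (x ^+ k.+1) = g x ^+ k.+1.
  by elim: k => // k IH; rewrite exprS gM IH -exprS.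
rewrite -[b * a * c]gK; apply: jacobson_el_rmorph => [t|]; first by exists (g t).
rewrite !gM; apply: NJ; exists n.+1.
by rewrite -!gM -gX exprSr abcn0 mul0r g0.
Qed.

Section Product.
Variables T1 T2 : pzRingType.

Lemma maximal_left_ideal_pair (L : T1 * T2 -> Prop) :
  maximal_left_ideal L -> L (1, 0) \/ L (0, 1).
Proof.
move=> maxL; have [|L01] := classic (L (0, 1)); [by right | left].
have [[i1 i2] [[r1 r2] [Li [E1 _]]]] := maximal_left_ideal_comax maxL L01.
have [[_ _ LM] _ _] := maxL.
suff -> : ((1, 0) : T1 * T2) = (1, 0) * (i1, i2) by apply: LM.
by apply/eqP; rewrite xpair_eqE /= mul1r mul0r -E1 mulr0 addr0 !eqxx.
Qed.

Lemma jacobson_el_pair a b :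
  jacobson_el a -> jacobson_el b -> jacobson_el ((a, b) : T1 * T2).
Proof.
move=> Ja Jb L maxL; have [[_ _ LM] _ _] := maxL.
have [L10|L01] := maximal_left_ideal_pair maxL.
- apply: (maximal_left_ideal_jacobson_preim (f := snd)) => // [t|[k1 k2] /= ->].
    by exists (0, t).
  suff -> : ((k1, 0) : T1 * T2) = (k1, 0) * (1, 0) by apply: LM.
  by apply/eqP; rewrite xpair_eqE /= mulr1 mulr0 !eqxx.
- apply: (maximal_left_ideal_jacobson_preim (f := fst)) => // [t|[k1 k2] /= ->].
    by exists (t, 0).
  suff -> : ((0, k2) : T1 * T2) = (0, k2) * (0, 1) by apply: LM.
  by apply/eqP; rewrite xpair_eqE /= mulr1 mulr0 !eqxx.
Qed.

Lemma NJ_symmetric_pair :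
  NJ_symmetric (T1 * T2)%type <-> NJ_symmetric T1 /\ NJ_symmetric T2.
Proof.
split=> [NJ | [NJ1 NJ2] x y z [n xyzn0]].
- split.
  + apply: (NJ_symmetric_retract (f := fst) (g := fun a => (a, 0))) NJ => //.
    by move=> a a'; apply/eqP; rewrite xpair_eqE /= mulr0 !eqxx.
  + apply: (NJ_symmetric_retract (f := snd) (g := fun b => (0, b))) NJ => //.
    by move=> b b'; apply/eqP; rewrite xpair_eqE /= mulr0 !eqxx.
- rewrite [y * x * z]surjective_pairing.
  apply: jacobson_el_pair; [apply: NJ1 | apply: NJ2]; exists n.
  + by rewrite -!(rmorphM fst) -rmorphXn xyzn0.
  + by rewrite -!(rmorphM snd) -rmorphXn xyzn0.
Qed.

End Product.

Section MoritaDiagonal.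
Variables (R1 R2 : pzRingType) (M : bimod R1 R2) (P : bimod R2 R1).

Definition morita_diag (x : morita_ring M P) : R1 * R2 := (x.1.1.1, x.2).

Fact morita_diag_is_zmod_morphism : zmod_morphism morita_diag.
Proof. by case=> [[[? ?] ?] ?] [[[? ?] ?] ?]. Qed.

Fact morita_diag_is_monoid_morphism : monoid_morphism morita_diag.
Proof. by split=> // - [[[? ?] ?] ?] [[[? ?] ?] ?]. Qed.

HB.instance Definition _ := GRing.isZmodMorphism.Build _ _ morita_diag
  morita_diag_is_zmod_morphism.
HB.instance Definition _ := GRing.isMonoidMorphism.Build _ _ morita_diag
  morita_diag_is_monoid_morphism.

Lemma morita_diag_surj t : exists x, morita_diag x = t.
Proof. by case: t => a b; exists (a, 0, 0, b). Qed.

Lemma morita_diag_kernel_sqr0 k r : morita_diag k = 0 -> (r * k) ^+ 2 = 0.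
Proof.
case: k => [[[a m] p] b] [-> ->]; case: r => [[[a' m'] p'] b'].
by rewrite expr2 /GRing.mul /= !(mulr0, mul0r, bm_0l, bm_0r, addr0, add0r).
Qed.

End MoritaDiagonal.

Theorem proposition2p21 (R1 R2 : pzRingType) (M : bimod R1 R2) (P : bimod R2 R1) :
  NJ_symmetric (morita_ring M P) <-> (NJ_symmetric R1 /\ NJ_symmetric R2).
Proof.
rewrite (NJ_symmetric_sqr0_kernel (morita_diag_surj M P)).
  exact: NJ_symmetric_pair.
exact: morita_diag_kernel_sqr0.
Qed.
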